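(* Let $n\ge2$, $k\ge1$, and let $\mathbf x\neq\mathbf y$ be vertices of $H_{n,k}$ whose longest common prefix has length $i$ (so $0\le i\le k-1$, i.e. $x_j=y_j$ for $j\le i$ and $x_{i+1}\ne y_{i+1}$). Then the distance between $\mathbf x$ and $\mathbf y$ in $H_{n,k}$ is at most $2(k-i)-1$.
   Context: Let $n\ge 2$ and $k\ge 1$ be integers. $H_{n,k}$ is the simple undirected graph with vertex set $V_{n,k}=\mathbb{Z}_n^k$ (so $|V_{n,k}|=n^k$), whose vertices are written as strings $x_1x_2\ldots x_k$ with $x_j\in\mathbb{Z}_n=\{0,1,\ldots,n-1\}$. Two distinct vertices are adjacent if and only if they are related by one of the following rules. For $i=0$ the prefix $x_1\ldots x_i$ is empty, and ''$0\ldots0$'' denotes a string of zeros completing the word to length $k$. (R1) $x_1\ldots x_{k-1}x_k\sim x_1\ldots x_{k-1}y_k$ whenever $y_k\neq x_k$. (R2) For $0\le i\le k-2$: $x_1\ldots x_i0\ldots0\sim x_1\ldots x_ix_{i+1}\ldots x_k$ whenever $x_j\neq 0$ for all $i+1\le j\le k$. (R3) For $1\le i\le k-1$: $x_1\ldots x_{i-1}x_i0\ldots0\sim x_1\ldots x_{i-1}y_i0\ldots0$ whenever $x_i,y_i\neq0$ and $x_i\ne y_i$. In particular, $H_{n,1}$ is the complete graph $K_n$. *)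

From mathcomp Require Import all_boot.
Set Implicit Arguments. Unset Strict Implicit. Unset Printing Implicit Defensive.

(* Vertices of H_{n,k}: words x_1 ... x_k over Z_n, represented as k-tuples of
   'I_n.  Positions are 0-based: tnth x j (j : 'I_k) is the letter x_{j+1}. *)
Definition vtx (n k : nat) := (k.-tuple 'I_n).

Definition letter n k (x : vtx n k) (j : nat) : nat :=
  nth 0 (map val (val x)) j.

Definition agree_upto n k (x y : vtx n k) (m : nat) : bool :=
  [forall j : 'I_k, (j < m) ==> (tnth x j == tnth y j)].

Definition R1 n k (x y : vtx n k) : bool :=
  agree_upto x y k.-1 && (letter x k.-1 != letter y k.-1).

(* (R2) for 0 <= i <= k-2 : x_1..x_i 0..0  ~  x_1..x_i x_{i+1}..x_k with all
   x_{i+1},...,x_k nonzero.  Here a is the zero-padded word. *)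
Definition R2dir n k (a b : vtx n k) : bool :=
  [exists i : 'I_k, (i <= k - 2) &&
     [&& agree_upto a b i,
         [forall j : 'I_k, (i <= j) ==> (val (tnth a j) == 0)] &
         [forall j : 'I_k, (i <= j) ==> (val (tnth b j) != 0)]]].

(* (R3) for 1 <= i <= k-1 : x_1..x_{i-1} x_i 0..0 ~ x_1..x_{i-1} y_i 0..0
   with x_i, y_i nonzero and distinct.  In 0-based terms, p = i-1 is the
   position of the differing letter, with 0 <= p <= k-2. *)
Definition R3 n k (x y : vtx n k) : bool :=
  [exists p : 'I_k, (p <= k - 2) &&
     [&& agree_upto x y p,
         [forall j : 'I_k, (p < j) ==>
            ((val (tnth x j) == 0) && (val (tnth y j) == 0))],
         val (tnth x p) != 0, val (tnth y p) != 0 &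
         tnth x p != tnth y p]].

Definition Hadj n k : rel (vtx n k) :=
  fun x y => (x != y) &&
    [|| R1 x y, R2dir x y, R2dir y x | R3 x y].

Definition common_prefix_len n k (x y : vtx n k) (i : nat) : Prop :=
  i < k /\ agree_upto x y i /\ letter x i != letter y i.

Definition dist_le n k (x y : vtx n k) (d : nat) : Prop :=
  exists p : seq (vtx n k), [/\ path (@Hadj n k) x p, last x p = y & size p <= d].

From mathcomp Require Import all_boot zify.
Set Implicit Arguments. Unset Strict Implicit. Unset Printing Implicit Defensive.

(* Write x|m for x with every letter from position m on replaced by 0.
   By downward induction on p, x reaches x|p+1 in k-1-p steps and, when
   x_p <> 0, also reaches in k-1-p steps some vertex agreeing with x up to p
   whose letters from p on are all nonzero: an (R2) edge (or (R1) at the last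
   position) turns one kind of vertex into the other.  If x and y first differ
   at i and x_i = 0, walk x -> x|i, take the (R2) edge to a nonzero-suffix
   vertex reached from y, then walk back to y; if x_i, y_i <> 0, walk
   x -> x|i+1, take the (R3) (or (R1)) edge to y|i+1, then walk back to y.
   Both walks have length (k-1-i) + 1 + (k-1-i). *)

Section HammingDistance.
Variables n k : nat.
Local Notation V := (vtx n k).

Lemma agree_uptoP (x y : V) m :
  reflect (forall j : 'I_k, j < m -> tnth x j = tnth y j) (agree_upto x y m).
Proof.
apply: (iffP forallP) => H j.
- by move=> hj; move: (H j); rewrite hj => /eqP.
- by apply/implyP => hj; rewrite H.
Qed.

Lemma agree_upto_sym (x y : V) m : agree_upto x y m -> agree_upto y x m.
Proof. by move/agree_uptoP=> H; apply/agree_uptoP=> j hj; rewrite H. Qed.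

Lemma agree_upto_trans (x y z : V) m :
  agree_upto x y m -> agree_upto y z m -> agree_upto x z m.
Proof.
by move=> /agree_uptoP h1 /agree_uptoP h2; apply/agree_uptoP => j hj; rewrite h1 ?h2.
Qed.

Lemma agree_upto_leq (x y : V) m m' :
  m' <= m -> agree_upto x y m -> agree_upto x y m'.
Proof. move=> le /agree_uptoP H; apply/agree_uptoP=> j hj; apply: H; lia. Qed.

Lemma letter_tnth (x : V) (j : 'I_k) : letter x j = val (tnth x j).
Proof.
rewrite /letter (nth_map (tnth x j)); last by rewrite size_tuple.
by rewrite -(tnth_nth (tnth x j)).
Qed.

Lemma R1_sym (x y : V) : R1 x y -> R1 y x.
Proof. by case/andP=> /agree_upto_sym a b; rewrite /R1 a eq_sym b. Qed.

Lemma R3_sym (x y : V) : R3 x y -> R3 y x.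
Proof.
case/existsP=> p /andP[hp /and5P[a b c d e]].
apply/existsP; exists p; apply/andP; split=> //; apply/and5P; split=> //.
- exact: agree_upto_sym.
- by apply/forallP=> j; move/forallP: b => /(_ j); rewrite andbC.
- by rewrite eq_sym.
Qed.

Lemma Hadj_sym (x y : V) : Hadj x y -> Hadj y x.
Proof.
case/andP=> ne /or4P [h|h|h|h]; apply/andP; split; rewrite 1?eq_sym //;
  apply/or4P.
- by constructor 1; apply: R1_sym.
- by constructor 3.
- by constructor 2.
- by constructor 4; apply: R3_sym.
Qed.

Lemma dist_le0 (x : V) : dist_le x x 0.
Proof. by exists [::]. Qed.

Lemma dist_le_edge (x y : V) : Hadj x y -> dist_le x y 1.
Proof. by move=> h; exists [:: y]; rewrite /= h. Qed.

Lemma dist_le_trans (x y z : V) a b :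
  dist_le x y a -> dist_le y z b -> dist_le x z (a + b).
Proof.
case=> p [p1 l1 s1] [q [q1 l2 s2]]; exists (p ++ q); split.
- by rewrite cat_path p1 l1 q1.
- by rewrite last_cat l1.
- by rewrite size_cat leq_add.
Qed.

Lemma dist_le_mono (x y : V) a b : a <= b -> dist_le x y a -> dist_le x y b.
Proof. by move=> le [p [h1 h2 h3]]; exists p; split => //; apply: leq_trans le. Qed.

Lemma dist_le_sym (x y : V) a : dist_le x y a -> dist_le y x a.
Proof.
case=> p [hp <- hs]; apply: dist_le_mono hs _.
elim: p x hp => [|z p IH] x /=; first by move=> _; apply: dist_le0.
case/andP=> hxz /IH dz; rewrite -addn1.
exact: dist_le_trans dz (dist_le_edge (Hadj_sym hxz)).
Qed.

Definition zero_from m (a : V) := forall j : 'I_k, m <= j -> val (tnth a j) = 0.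
Definition nonzero_from m (a : V) := forall j : 'I_k, m <= j -> val (tnth a j) != 0.

Lemma Hadj_zero_nonzero (a b : V) (m : 'I_k) :
  agree_upto a b m -> zero_from m a -> nonzero_from m b -> Hadj a b.
Proof.
move=> ag za nb.
have ne : a != b by apply/eqP=> eab; move: (nb m (leqnn _)); rewrite -eab za.
apply/andP; split => //; apply/or4P.
case: (leqP m (k - 2)) => hm.
- constructor 2; apply/existsP; exists m; rewrite hm ag /=.
  by apply/andP; split; apply/forallP=> j; apply/implyP=> hj; [rewrite za | apply: nb].
- constructor 1; rewrite /R1.
  have -> : k.-1 = m by move: (ltn_ord m); lia.
  by rewrite ag !letter_tnth za // eq_sym nb.
Qed.

Definition fill m (x : V) (c : 'I_n) : V :=
  [tuple (if j < m then tnth x j else c) | j < k].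

Lemma tnth_fill m x c j : tnth (fill m x c) j = if j < m then tnth x j else c.
Proof. by rewrite tnth_mktuple. Qed.

Lemma agree_upto_fill m x c : agree_upto x (fill m x c) m.
Proof. by apply/agree_uptoP => j hj; rewrite tnth_fill hj. Qed.

Lemma fill_id m x c : k <= m -> fill m x c = x.
Proof.
move=> hm; apply: eq_from_tnth => j; rewrite tnth_fill.
by have -> : j < m by move: (ltn_ord j); lia.
Qed.

Lemma fill_agree m x y c : agree_upto x y m -> fill m x c = fill m y c.
Proof.
move/agree_uptoP=> ag; apply: eq_from_tnth => j; rewrite !tnth_fill.
by case: ifP => // /ag.
Qed.

Lemma fill_succ (m : 'I_k) x c : tnth x m = c -> fill m.+1 x c = fill m x c.
Proof.
move=> hx; apply: eq_from_tnth => j; rewrite !tnth_fill.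
case: (ltnP j m) => hj; first by have -> : j < m.+1 by lia.
case: ltnP => // hj2.
by have -> : j = m by apply: ord_inj; lia.
Qed.

Variables z0 z1 : 'I_n.
Hypotheses (hz0 : val z0 = 0) (hz1 : val z1 != 0).

Lemma zero_from_fill m x : zero_from m (fill m x z0).
Proof. by move=> j hj; rewrite tnth_fill ltnNge hj. Qed.

Lemma nonzero_from_fill m x : nonzero_from m (fill m x z1).
Proof. by move=> j hj; rewrite tnth_fill ltnNge hj. Qed.

Lemma reach_fill_and_nonzero_suffix d (p : 'I_k) x : p + d = k.-1 ->
  dist_le x (fill p.+1 x z0) d /\
  (val (tnth x p) != 0 ->
   exists2 z : V, agree_upto x z p.+1 & nonzero_from p z /\ dist_le x z d).
Proof.
elim: d p x => [|d IH] p x hd.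
  rewrite addn0 in hd; rewrite fill_id; last by move: (ltn_ord p); lia.
  split=> [|hx]; first exact: dist_le0.
  exists x; first exact/agree_uptoP.
  split; last exact: dist_le0.
  move=> j hj; suff -> : j = p by [].
  by apply: ord_inj; move: (ltn_ord j) (ltn_ord p); lia.
have Hq : p.+1 < k by move: (ltn_ord p); lia.
have [IHfill IHnz] := IH (Ordinal Hq) x (etrans (addSnnS _ _) hd).
have edge_at_succ (a b : V) : agree_upto a b p.+1 -> zero_from p.+1 a ->
    nonzero_from p.+1 b -> Hadj a b := @Hadj_zero_nonzero a b (Ordinal Hq).
case: (eqVneq (val (tnth x (Ordinal Hq))) 0) => hxq.
- (* x|p+2 = x|p+1, and an (R2) edge leads to the all-z1 suffix *)
  rewrite fill_succ in IHfill; last by apply: val_inj; rewrite hxq hz0.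
  split=> [|hxp]; first exact: dist_le_mono IHfill.
  exists (fill p.+1 x z1); first exact: agree_upto_fill.
  split.
    move=> j hj; rewrite tnth_fill; case: ifP => // hj2.
    by have -> : j = p by apply: val_inj => /=; lia.
  rewrite -[d.+1]addn1; apply: dist_le_trans IHfill (dist_le_edge _).
  apply: edge_at_succ; last exact: nonzero_from_fill.
    exact: agree_upto_trans (agree_upto_sym (agree_upto_fill _ _ _))
                            (agree_upto_fill _ _ _).
  exact: zero_from_fill.
- (* the nonzero-suffix vertex z found for p+1 satisfies z|p+1 = x|p+1 *)
  have [z ag [nz dz]] := IHnz hxq.
  split.
    rewrite (fill_agree _ (agree_upto_leq (leqnSn _) ag)) -[d.+1]addn1.
    apply: dist_le_trans dz (dist_le_edge (Hadj_sym (edge_at_succ _ _ _ _ nz))).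
      exact: agree_upto_sym (agree_upto_fill _ _ _).
    exact: zero_from_fill.
  move=> hxp; exists z; first exact: agree_upto_leq ag.
  split; last exact: dist_le_mono dz.
  move=> j hj; case: (eqVneq (val j) p) => ej; last first.
    by apply: nz; rewrite ltn_neqAle hj andbT eq_sym.
  have -> : j = p by apply: val_inj.
  by move/agree_uptoP: ag => <- //=; lia.
Qed.

Lemma dist_fill (p : 'I_k) x : dist_le x (fill p.+1 x z0) (k.-1 - p).
Proof.
have hp : p <= k.-1 by move: (ltn_ord p); lia.
by have [] := reach_fill_and_nonzero_suffix x (subnKC hp).
Qed.

Lemma dist_nonzero_suffix (p : 'I_k) x : val (tnth x p) != 0 ->
  exists2 z : V, agree_upto x z p.+1 & nonzero_from p z /\ dist_le x z (k.-1 - p).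
Proof.
have hp : p <= k.-1 by move: (ltn_ord p); lia.
by have [] := reach_fill_and_nonzero_suffix x (subnKC hp).
Qed.

Lemma Hadj_fill_first_diff (x y : V) (i : 'I_k) : agree_upto x y i ->
  val (tnth x i) != 0 -> val (tnth y i) != 0 -> tnth x i != tnth y i ->
  Hadj (fill i.+1 x z0) (fill i.+1 y z0).
Proof.
move=> /agree_uptoP ag hx hy hxy.
have fill_i v : tnth (fill i.+1 v z0) i = tnth v i by rewrite tnth_fill ltnSn.
have agf : agree_upto (fill i.+1 x z0) (fill i.+1 y z0) i.
  by apply/agree_uptoP => j hj; rewrite !tnth_fill ltnS (ltnW hj) ag.
apply/andP; split.
  by apply: contra hxy => /eqP e; rewrite -fill_i e fill_i.
apply/or4P; case: (leqP i (k - 2)) => hi.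
- constructor 4; apply/existsP; exists i; rewrite hi /= agf !fill_i hx hy hxy.
  apply/and5P; split => //; apply/forallP => j; apply/implyP => hj.
  by rewrite !tnth_fill ltnNge hj /= hz0.
- constructor 1; rewrite /R1.
  have -> : k.-1 = i by move: (ltn_ord i); lia.
  by rewrite agf !letter_tnth !fill_i; apply: contra hxy => /eqP /val_inj ->.
Qed.

Lemma dist_first_diff_zero (x y : V) (i : 'I_k) : agree_upto x y i ->
  val (tnth x i) = 0 -> val (tnth y i) != 0 -> dist_le x y (2 * (k - i) - 1).
Proof.
move=> ag hx hy.
have [z agz [nz dz]] := dist_nonzero_suffix hy.
have dx := dist_fill i x.
rewrite fill_succ in dx; last by apply: val_inj; rewrite hx hz0.
have E : Hadj (fill i x z0) z.
  apply: (@Hadj_zero_nonzero _ _ i) nz; last exact: zero_from_fill.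
  apply: agree_upto_trans (agree_upto_sym (agree_upto_fill _ _ _)) _.
  exact: agree_upto_trans ag (agree_upto_leq (leqnSn _) agz).
have := dist_le_trans (dist_le_trans dx (dist_le_edge E)) (dist_le_sym dz).
by apply: dist_le_mono; move: (ltn_ord i); lia.
Qed.

Lemma dist_first_diff_nonzero (x y : V) (i : 'I_k) : agree_upto x y i ->
  val (tnth x i) != 0 -> val (tnth y i) != 0 -> tnth x i != tnth y i ->
  dist_le x y (2 * (k - i) - 1).
Proof.
move=> ag hx hy hxy.
have E := Hadj_fill_first_diff ag hx hy hxy.
have := dist_le_trans (dist_le_trans (dist_fill i x) (dist_le_edge E))
                      (dist_le_sym (dist_fill i y)).
by apply: dist_le_mono; move: (ltn_ord i); lia.
Qed.

End HammingDistance.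

Theorem mainTheorem8 (n k : nat) (x y : vtx n k) (i : nat) :
  2 <= n -> 1 <= k -> x != y -> common_prefix_len x y i ->
  dist_le x y (2 * (k - i) - 1).
Proof.
move=> hn _ _ [hi [ag hl]].
have hz0 : val (Ordinal (ltnW hn)) = 0 by [].
have hz1 : val (Ordinal hn) != 0 by [].
pose I := Ordinal hi.
have hxy : val (tnth x I) != val (tnth y I) by rewrite -!letter_tnth.
case: (eqVneq (val (tnth x I)) 0) => hx.
  by apply: (dist_first_diff_zero hz0 hz1 (i := I) ag hx); rewrite -hx eq_sym.
case: (eqVneq (val (tnth y I)) 0) => hy.
  exact/dist_le_sym/(dist_first_diff_zero hz0 hz1 (i := I) (agree_upto_sym ag) hy).
apply: (dist_first_diff_nonzero hz0 hz1 (i := I) ag hx hy).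
by apply: contra hxy => /eqP ->.
Qed.
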